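(* Let $G$ be a tree on $n\geq 2$ vertices with Randi\'c index $R$ and radius $r$. If $G$ is a path with an even number of vertices, greater than $2$, then \[R-r=\sqrt 2-\frac{3}{2};\] otherwise \[R-r\geq 0,\] with equality for the path on $2$ vertices.
   Context: The Randi\'c index is $R(G)=\sum_{uv\in E(G)}\frac{1}{\sqrt{d_ud_v}}$, where $d_v$ is the degree of $v$. The radius is the minimum over vertices $v$ of the maximum distance from $v$ to another vertex. *)

From HB Require Import structures.
From mathcomp Require Import all_boot all_order all_algebra.
From mathcomp Require Import reals.
Set Implicit Arguments. Unset Strict Implicit. Unset Printing Implicit Defensive.
Import Order.TTheory GRing.Theory Num.Theory.

Section Graphs.
Variable n : nat.
Implicit Types (adj : rel 'I_n).

Definition simple_graph adj := symmetric adj /\ irreflexive adj.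

Definition connected adj := forall x y : 'I_n, connect adj x y.

Definition has_cycle adj :=
  exists (x : 'I_n) (p : seq 'I_n),
    [/\ 2 <= size p, uniq (x :: p), path adj x p & adj (last x p) x].

Definition is_tree adj := connected adj /\ ~ has_cycle adj.

Definition deg adj (v : 'I_n) : nat := #|[set u | adj v u]|.

Fixpoint ball adj (k : nat) (x : 'I_n) : {set 'I_n} :=
  if k is k'.+1 then
    ball adj k' x :|: [set y | [exists z in ball adj k' x, adj z y]]
  else [set x].

(* graph distance: least k with y within k steps of x (meaningful for connected graphs) *)
Definition dist adj (x y : 'I_n) : nat :=
  find (fun k => y \in ball adj k x) (iota 0 n).

Definition ecc adj (x : 'I_n) : nat := \max_(y < n) dist adj x y.

(* radius = min over vertices of eccentricity (default n exceeds every eccentricity) *)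
Definition radius adj : nat := \big[minn/n]_(x < n) ecc adj x.

Definition randic (R : rcfType) adj : R :=
  \sum_(u < n) \sum_(v < n | (u < v)%N && adj u v)
     (Num.sqrt ((deg adj u * deg adj v)%:R))^-1.

(* G is (isomorphic to) the path P_n *)
Definition is_path_graph adj :=
  exists f : 'I_n -> 'I_n, injective f /\
    forall u v, adj u v = ((f u == (f v).+1 :> nat) || (f v == (f u).+1 :> nat)).

End Graphs.

From HB Require Import structures.
From mathcomp Require Import all_boot all_order all_algebra.
From mathcomp Require Import reals.
From mathcomp Require Import zify ring lra.
Set Implicit Arguments. Unset Strict Implicit. Unset Printing Implicit Defensive.
Import Order.TTheory GRing.Theory Num.Theory.

(* Root the tree at one end [root] of a diametral path [spine 0 = root, ..., spine diam = b].
   The middle vertex of this spine has eccentricity [ceil(diam/2)], which is the radius.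
   Charging every off-spine edge to its lower endpoint [w], the inequality
   [1/sqrt(d_w d_p) >= 1/sqrt d_p - (d_w - 1)/sqrt d_w] telescopes through the subtrees and
   leaves [R >= sum_i x_i x_(i+1) + sum_i (d_i - 2) x_i], with [d_i] the spine degrees and
   [x_i = 1/sqrt d_i].  Since [x_0 = x_diam = 1] and [x_i <= 1/sqrt 2] in between, every inner
   spine edge has [x_i x_(i+1) - x_i - x_(i+1) >= 1/2 - sqrt 2], whence
   [R >= (diam - 2)/2 + sqrt 2 + sum_i (sqrt d_i - sqrt 2)].  This beats [ceil(diam/2)] when
   [diam] is even; when it is odd the deficit [3/2 - sqrt 2] is covered by [sqrt 3 - sqrt 2] as
   soon as some spine vertex has degree at least 3, which fails only for the path itself, where
   all the bounds are equalities. *)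

Section InverseSquareRoots.
Variable R : rcfType.
Local Open Scope ring_scope.

Definition invsqrtn (k : nat) : R := (Num.sqrt k%:R)^-1.

Lemma invsqrtn1 : invsqrtn 1 = 1.
Proof. by rewrite /invsqrtn sqrtr1 invr1. Qed.

Lemma invsqrtnM a b : invsqrtn (a * b) = invsqrtn a * invsqrtn b.
Proof. by rewrite /invsqrtn natrM sqrtrM ?ler0n // invfM. Qed.

Lemma invsqrtn_ge0 k : 0 <= invsqrtn k.
Proof. by rewrite invr_ge0 sqrtr_ge0. Qed.

Lemma invsqrtn_gt0 k : (0 < k)%N -> 0 < invsqrtn k.
Proof. by move=> k0; rewrite invr_gt0 sqrtr_gt0 ltr0n. Qed.

Lemma invsqrtn_le a b : (0 < a <= b)%N -> invsqrtn b <= invsqrtn a.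
Proof.
case/andP=> a0 ab; have b0 := leq_trans a0 ab.
by rewrite lef_pV2 ?posrE ?sqrtr_gt0 ?ltr0n // ler_sqrt ?ltr0n // ler_nat.
Qed.

Lemma invsqrtn_le1 k : (0 < k)%N -> invsqrtn k <= 1.
Proof. by move=> k0; rewrite -invsqrtn1 invsqrtn_le. Qed.

Lemma natr_mul_invsqrtn k : k%:R * invsqrtn k = Num.sqrt k%:R.
Proof.
case: (posnP k) => [->|k0]; first by rewrite mul0r sqrtr0.
have s0 : Num.sqrt (k%:R : R) != 0 by rewrite gt_eqF // sqrtr_gt0 ltr0n.
have kE : k%:R = Num.sqrt (k%:R : R) * Num.sqrt k%:R by rewrite -expr2 sqr_sqrtr.
by rewrite {1}kE -mulrA mulfV ?mulr1.
Qed.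

Lemma natr_mul_invsqrtnSS k : k%:R * invsqrtn k.+2 = Num.sqrt k.+2%:R - 2 * invsqrtn k.+2.
Proof. by rewrite -natr_mul_invsqrtn -addn2 natrD mulrDl addrK. Qed.

Lemma invsqrtn2_sqr : invsqrtn 2 ^+ 2 = 2^-1.
Proof. by rewrite exprVn sqr_sqrtr ?ler0n. Qed.

Lemma mul2_invsqrtn2 : 2 * invsqrtn 2 = Num.sqrt 2.
Proof. by rewrite -natr_mul_invsqrtn. Qed.

(* With [x = invsqrtn a] and [y = invsqrtn b], multiplying by [x] turns this into
   [(1 - x) (1 + x - x y) >= 0]. *)
Lemma invsqrtn_edge_ge a b : (0 < a)%N -> (0 < b)%N ->
  invsqrtn b - a.-1%:R * invsqrtn a <= invsqrtn a * invsqrtn b.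
Proof.
move=> a0 b0; have x0 := invsqrtn_gt0 a0; have x1 := invsqrtn_le1 a0.
have y0 := invsqrtn_ge0 b; have y1 := invsqrtn_le1 b0.
have -> : a.-1%:R * invsqrtn a = (invsqrtn a)^-1 - invsqrtn a.
  have aE : a%:R = a.-1%:R + 1 :> R by rewrite natr1 prednK.
  by rewrite invrK -natr_mul_invsqrtn aE mulrDl mul1r addrK.
set x := invsqrtn a in x0 x1 *; set y := invsqrtn b in y0 y1 *.
rewrite -subr_ge0 -(pmulr_rge0 _ x0).
have -> : x * (x * y - (y - (x^-1 - x))) = (1 - x) * (1 + x - x * y).
  by field; rewrite gt_eqF.
by apply: mulr_ge0; nra.
Qed.

End InverseSquareRoots.

Section PathProducts.
Variable R : realFieldType.
Local Open Scope ring_scope.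
Implicit Types (t p q : R) (x : nat -> R).

Lemma big_ord_recLR (F : nat -> R) m :
  \sum_(i < m.+2) F i = F 0%N + \sum_(i < m) F i.+1 + F m.+1.
Proof. by rewrite big_ord_recr big_ord_recl. Qed.

Lemma edge_product_ge t p q : t <= 1 -> p <= t -> q <= t ->
  p + q + (t ^+ 2 - 2 * t) <= p * q.
Proof.
move=> t1 pt qt.
have : 0 <= (t - p) * (t - q) by apply: mulr_ge0; lra.
have : 0 <= (1 - t) * (2 * t - p - q) by apply: mulr_ge0; lra.
nra.
Qed.

(* Every interior term is counted on two edges; the two end edges cost nothing
   because [x 0 = x m.+2 = 1]. *)
Lemma path_products_ge t x m : t <= 1 -> x 0%N = 1 -> x m.+2 = 1 ->
  (forall i, (i <= m)%N -> x i.+1 <= t) ->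
  2 * \sum_(i < m.+1) x i.+1 + m%:R * (t ^+ 2 - 2 * t) <= \sum_(i < m.+2) x i * x i.+1.
Proof.
move=> t1 x0 xm xt.
have edges : \sum_(i < m) (x i.+1 + x i.+2 + (t ^+ 2 - 2 * t)) <= \sum_(i < m) x i.+1 * x i.+2.
  by apply: ler_sum => i _; apply: edge_product_ge; rewrite ?xt // ltnW.
rewrite big_split sumr_const card_ord big_split /= -(mulr_natl (t ^+ 2 - 2 * t)) in edges.
rewrite (big_ord_recLR (fun i => x i * x i.+1)) x0 xm mul1r mulr1 /=.
have first_out : \sum_(i < m.+1) x i.+1 = x 1%N + \sum_(i < m) x i.+2 by rewrite big_ord_recl.
rewrite (mulr_natl _ 2) mulr2n {1}first_out big_ord_recr /=; lra.
Qed.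

Lemma path_products_const t x m : x 0%N = 1 -> x m.+2 = 1 ->
  (forall i, (i <= m)%N -> x i.+1 = t) ->
  \sum_(i < m.+2) x i * x i.+1 = 2 * t + m%:R * t ^+ 2.
Proof.
move=> x0 xm xt; rewrite (big_ord_recLR (fun i => x i * x i.+1)) x0 xm xt // xt //=.
rewrite (eq_bigr (fun=> t ^+ 2)) => [|i _]; last by rewrite !xt ?expr2 // ltnW.
by rewrite sumr_const card_ord -mulr_natl; ring.
Qed.

End PathProducts.

Lemma natr_sub_half (R : realFieldType) k :
  ((k - k./2)%N%:R = (k%:R + (odd k)%:R) / 2 :> R)%R.
Proof.
have kE : k = odd k + k./2 + k./2 by rewrite -addnA addnn odd_double_half.
have -> : k - k./2 = odd k + k./2 by rewrite {1}kE addnK.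
have kR : (k%:R = (odd k)%:R + (k./2)%:R + (k./2)%:R :> R)%R by rewrite {1}kE !natrD.
by rewrite kR natrD; lra.
Qed.

Section GraphMetric.
Variables (n : nat) (adj : rel 'I_n).
Implicit Types (x y z : 'I_n) (phi : 'I_n -> nat).

Lemma ballS k x y :
  (y \in ball adj k.+1 x) = (y \in ball adj k x) || [exists z in ball adj k x, adj z y].
Proof. by rewrite /= !inE. Qed.

Lemma mem_ball0 x y : (y \in ball adj 0 x) = (y == x).
Proof. exact: in_set1. Qed.

Lemma ball_step k x z y : z \in ball adj k x -> adj z y -> y \in ball adj k.+1 x.
Proof. by move=> zx zy; rewrite ballS; apply/orP; right; apply/existsP; exists z; rewrite zx. Qed.

Lemma ball_mono k m x y : k <= m -> y \in ball adj k x -> y \in ball adj m x.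
Proof.
move=> /subnK <-; elim: (m - k) => [//|d IH] yx.
by rewrite addSn ballS IH.
Qed.

Lemma ball_trans k m x y z :
  y \in ball adj k x -> z \in ball adj m y -> z \in ball adj (k + m) x.
Proof.
move=> yx; elim: m z => [|m IH] z; first by rewrite mem_ball0 addn0 => /eqP ->.
rewrite ballS addnS => /orP[/IH /(ball_mono (leqnSn _)) //|/existsP[w /andP[wy wz]]].
exact: ball_step (IH _ wy) wz.
Qed.

Lemma ball_path x p : path adj x p -> last x p \in ball adj (size p) x.
Proof.
elim: p x => [|y p IH] x /=; first by rewrite mem_ball0.
case/andP=> xy /IH; apply: (ball_trans (k := 1)).
by apply: ball_step xy; rewrite mem_ball0.
Qed.

Lemma potential_ball phi : (forall z y, adj z y -> phi y <= phi z + 1) ->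
  forall k x y, y \in ball adj k x -> phi y <= phi x + k.
Proof.
move=> phi1; elim=> [|k IH] x y; first by rewrite mem_ball0 addn0 => /eqP ->.
rewrite ballS => /orP[/IH|/existsP[z /andP[/IH zx /phi1]]]; lia.
Qed.

Lemma exists_diametral_pair x0 :
  exists root b, forall x y, dist adj x y <= dist adj root b.
Proof.
have [[root b] _ max_rb] := @arg_maxnP _ (x0, x0) xpredT (fun p => dist adj p.1 p.2) isT.
by exists root, b => x y; apply: (max_rb (x, y)).
Qed.

Hypothesis adj_sym : symmetric adj.

Lemma ball_sym k x y : y \in ball adj k x -> x \in ball adj k y.
Proof.
elim: k x y => [|k IH] x y; first by rewrite !mem_ball0 eq_sym.
rewrite ballS => /orP[/IH /(ball_mono (leqnSn _)) //|/existsP[z /andP[/IH zx zy]]].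
have yz : z \in ball adj 1 y.
  by apply: ball_step (_ : y \in ball adj 0 y) _; rewrite ?mem_ball0 // adj_sym.
by rewrite -add1n; apply: ball_trans yz zx.
Qed.

Hypothesis adj_connected : connected adj.

Lemma ball_connected x y : exists2 k, k < n & y \in ball adj k x.
Proof.
have /connectP[p + ->] := adj_connected x y.
case/shortenP=> p' xp' up' _; exists (size p'); last exact: ball_path.
by have := max_card (mem (x :: p')); rewrite card_ord (card_uniqP up').
Qed.

Lemma has_ball x y : has (fun k => y \in ball adj k x) (iota 0 n).
Proof. by have [k kn yx] := ball_connected x y; apply/hasP; exists k; rewrite ?mem_iota. Qed.

Lemma dist_ltn x y : dist adj x y < n.
Proof. by have := has_ball x y; rewrite has_find size_iota. Qed.

Lemma dist_leE k x y : dist adj x y <= k = (y \in ball adj k x).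
Proof.
apply/idP/idP => [dk|yx].
  apply: ball_mono dk _; have := nth_find 0 (has_ball x y).
  by rewrite -/(dist adj x y) nth_iota ?dist_ltn.
rewrite leqNgt; apply/negP => kd; have := before_find 0 kd.
by rewrite nth_iota ?(ltn_trans kd (dist_ltn x y)) // add0n yx.
Qed.

Lemma mem_ball_dist x y : y \in ball adj (dist adj x y) x.
Proof. by rewrite -dist_leE. Qed.

Lemma distC x y : dist adj x y = dist adj y x.
Proof.
by apply/eqP; rewrite eqn_leq !dist_leE; apply/andP; split; apply/ball_sym/mem_ball_dist.
Qed.

Lemma dist_triangle x y z : dist adj x z <= dist adj x y + dist adj y z.
Proof. by rewrite dist_leE; apply: ball_trans (mem_ball_dist x y) (mem_ball_dist y z). Qed.

Lemma dist_eq0 x y : (dist adj x y == 0) = (x == y).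
Proof. by rewrite -leqn0 dist_leE mem_ball0 eq_sym. Qed.

Lemma dist_refl x : dist adj x x = 0.
Proof. by apply/eqP; rewrite dist_eq0. Qed.

Lemma dist_le1 x y : adj x y -> dist adj x y <= 1.
Proof. by move=> xy; rewrite dist_leE; apply: ball_step xy; rewrite mem_ball0. Qed.

Lemma potential_dist phi : (forall z y, adj z y -> phi y <= phi z + 1) ->
  forall x y, phi y <= phi x + dist adj x y.
Proof. by move=> phi1 x y; apply: potential_ball phi1 _ _ _ (mem_ball_dist x y). Qed.

End GraphMetric.

Lemma bigminn_le (I : finType) (F : I -> nat) m c : \big[minn/m]_(i : I) F i <= F c.
Proof.
move: (mem_index_enum c); elim: (index_enum I) => [//|i r IH].
rewrite inE big_cons => /orP[/eqP <-|/IH]; first exact: geq_minl.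
exact: leq_trans (geq_minr _ _).
Qed.

Section RootedTree.
Variables (n : nat) (adj : rel 'I_n).
Hypotheses (adj_sym : symmetric adj) (adj_irr : irreflexive adj).
Hypotheses (adj_connected : connected adj) (adj_acyclic : ~ has_cycle adj).
Variable root : 'I_n.
Implicit Types (u v w z : 'I_n).

Definition depth w := dist adj root w.

Definition parent w := odflt w [pick z | adj z w && (depth z == (depth w).-1)].

Lemma depth_root : depth root = 0.
Proof. exact: dist_refl. Qed.

Lemma depth_eq0 w : (depth w == 0) = (w == root).
Proof. by rewrite dist_eq0 // eq_sym. Qed.

Lemma depth_gt0 w : (0 < depth w) = (w != root).
Proof. by rewrite lt0n depth_eq0. Qed.

Lemma depth_ltn w : depth w < n.
Proof. exact: dist_ltn. Qed.

Lemma depth_adj z w : adj z w -> depth w <= (depth z).+1.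
Proof.
move=> zw; apply: leq_trans (dist_triangle adj_connected root z w) _.
by rewrite -addn1 leq_add2l dist_le1.
Qed.

Lemma exists_lower_neighbour w :
  w != root -> exists z, adj z w && (depth z == (depth w).-1).
Proof.
rewrite -depth_gt0; have := mem_ball_dist adj_connected root w.
rewrite -/(depth w); case E: (depth w) => [//|k] /[swap] _.
rewrite ballS => /orP[|/existsP[z /andP[zk zw]]].
  by rewrite -(dist_leE adj_connected) -/(depth w) E ltnn.
exists z; rewrite zw /=; have := depth_adj zw.
by rewrite -(dist_leE adj_connected) -/(depth z) in zk; rewrite E eqn_leq zk ltnS => ->.
Qed.

Lemma parentP w : w != root -> adj (parent w) w /\ depth (parent w) = (depth w).-1.
Proof.
move=> wr; rewrite /parent; case: pickP => [z /andP[zw /eqP] //|none].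
by have [z] := exists_lower_neighbour wr; rewrite none.
Qed.

Lemma parent_root : parent root = root.
Proof.
rewrite /parent; case: pickP => [z /andP[zr /eqP]|//].
by rewrite depth_root => /eqP; rewrite depth_eq0 => /eqP zroot; rewrite zroot adj_irr in zr.
Qed.

Lemma adj_parent w : w != root -> adj (parent w) w.
Proof. by case/parentP. Qed.

Lemma depth_parent w : depth (parent w) = (depth w).-1.
Proof.
by case: (eqVneq w root) => [->|/parentP[]//]; rewrite parent_root depth_root.
Qed.

Lemma depth_parentS w : w != root -> (depth (parent w)).+1 = depth w.
Proof. by rewrite -depth_gt0 depth_parent => /prednK. Qed.

Lemma parent_neq w : w != root -> parent w != w.
Proof. by move/depth_parentS => dw; apply/eqP => pw; rewrite pw in dw; lia. Qed.

Lemma connect_root (e : rel 'I_n) :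
  (forall z, z != root -> e z (parent z)) -> forall z, connect e z root.
Proof.
move=> e_parent z; elim: {z}(depth z) {-2}z (erefl (depth z)) => [|k IH] z dz.
  by move/eqP: dz; rewrite depth_eq0 => /eqP ->.
have zr : z != root by rewrite -depth_gt0 dz.
by apply: connect_trans (connect1 (e_parent z zr)) (IH _ _); rewrite depth_parent dz.
Qed.

Definition del_edge u v : rel 'I_n :=
  [rel x y | adj x y && ~~ (((x == u) && (y == v)) || ((x == v) && (y == u)))].

Lemma detour_cycle u v : adj u v -> connect (del_edge u v) u v -> has_cycle adj.
Proof.
move=> uv /connectP[p p_path]; case/shortenP: p_path => p' p'path p'uniq _ vE.
exists u, p'; split => //; last first.
- by rewrite -vE adj_sym.
- by apply: sub_path p'path => x y /andP[].
case: p' p'path p'uniq vE => [|y [|z p']] //=; first by move=> _ _ vu; rewrite vu adj_irr in uv.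
by move=> /andP[/andP[_]] + _ _ yv; rewrite -yv !eqxx.
Qed.

Lemma adj_parent_or u v : adj u v -> parent u = v \/ parent v = u.
Proof.
move=> uv; case: (eqVneq (parent u) v) => [|puv]; first by left.
case: (eqVneq (parent v) u) => [|pvu]; first by right.
case: adj_acyclic; apply: (detour_cycle uv).
have del_parent z : z != root -> del_edge u v z (parent z).
  move=> zr; rewrite /del_edge /= adj_sym adj_parent //=; apply/negP.
  by case/orP=> /andP[/eqP zE /eqP pz]; [move: puv | move: pvu]; rewrite -zE pz eqxx.
have del_sym : symmetric (del_edge u v).
  by move=> x y; rewrite /del_edge /= adj_sym orbC (andbC (y == u)) (andbC (y == v)).
apply: connect_trans (connect_root del_parent u) _.
by rewrite (sym_connect_sym del_sym) connect_root.
Qed.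

Definition is_child u v := (u != root) && (parent u == v).

Definition children v := [set u | is_child u v].

Lemma adjE u v : adj u v = is_child u v || is_child v u.
Proof.
apply/idP/idP => [uv|/orP[/andP[ur /eqP <-]|/andP[vr /eqP <-]]].
- case: (adj_parent_or uv) => [pu|pv]; apply/orP; [left|right].
    have ur : u != root by apply: contraTneq uv => ur; rewrite -pu ur parent_root adj_irr.
    by rewrite /is_child ur pu eqxx.
  have vr : v != root by apply: contraTneq uv => vr; rewrite -pv vr parent_root adj_irr.
  by rewrite /is_child vr pv eqxx.
- by rewrite adj_sym adj_parent.
- exact: adj_parent.
Qed.

Lemma is_child_asym u v : is_child u v -> ~~ is_child v u.
Proof.
case/andP=> ur /eqP <-; apply/negP => /andP[_ /eqP ppu].
have := depth_parent (parent u); rewrite ppu; have := depth_parentS ur; lia.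
Qed.

Lemma deg_children u : deg adj u = (u != root) + #|children u|.
Proof.
rewrite /deg; case: (boolP (u != root)) => ur.
  have -> : [set v | adj u v] = parent u |: children u.
    by apply/setP => v; rewrite !inE adjE /is_child ur eq_sym.
  by rewrite cardsU1 inE (negbTE (is_child_asym _)) // /is_child ur eqxx.
by congr #|pred_of_set _|; apply/setP => v; rewrite !inE adjE /is_child (negbTE ur).
Qed.

Lemma sum_edges_parent (V : nmodType) (F : 'I_n -> 'I_n -> V) :
  (forall u v, F u v = F v u) ->
  (\sum_(u < n) \sum_(v < n | (u < v)%N && adj u v) F u v
   = \sum_(w | w != root) F w (parent w))%R.
Proof.
move=> Fsym; pose G (b : bool) u v := if b then F u v else 0%R.
transitivity (\sum_u \sum_v
  (G (is_child u v && (u < v)%N) u v + G (is_child v u && (u < v)%N) u v))%R.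
  apply: eq_bigr => u _; rewrite big_mkcond; apply: eq_bigr => v _.
  rewrite adjE /G; case uv: (is_child u v); last first.
    by case: (is_child v u); case: (u < v)%N; rewrite ?add0r.
  by rewrite (negbTE (is_child_asym uv)); case: (u < v)%N; rewrite ?addr0.
under eq_bigr do rewrite big_split.
rewrite big_split /= [X in GRing.add _ X]exchange_big -big_split.
transitivity (\sum_u \sum_v G (is_child u v) u v)%R.
  apply: eq_bigr => u _; rewrite -big_split; apply: eq_bigr => v _.
  rewrite /G (Fsym v u); case uv: (is_child u v); rewrite /= ?addr0 //.
  have : u != v by case/andP: uv => ur /eqP <-; rewrite eq_sym parent_neq.
  by rewrite neq_ltn; case: ltngtP; rewrite ?addr0 ?add0r.
rewrite [RHS]big_mkcond; apply: eq_bigr => u _; rewrite /G /is_child.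
case: (u != root) => /=; last by rewrite big1.
by rewrite -big_mkcond (big_pred1 (parent u)) // => v; rewrite /= eq_sym.
Qed.

Lemma randic_parent (R : rcfType) : randic R adj =
  (\sum_(w | w != root) invsqrtn R (deg adj w) * invsqrtn R (deg adj (parent w)))%R.
Proof.
transitivity (\sum_(u < n) \sum_(v < n | (u < v)%N && adj u v)
               invsqrtn R (deg adj u * deg adj v))%R; first by [].
rewrite sum_edges_parent => [|u v]; last by rewrite mulnC.
by apply: eq_bigr => w _; rewrite invsqrtnM.
Qed.

Section Diameter.
Variable b : 'I_n.
Hypothesis diametral : forall x y, dist adj x y <= dist adj root b.

Definition diam := depth b.

Definition spine i := iter (diam - i) parent b.

Definition ancestor u z := iter (depth z - depth u) parent z == u.

Lemma depth_le_diam z : depth z <= diam.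
Proof. exact: diametral. Qed.

Lemma depth_iter k z : depth (iter k parent z) = depth z - k.
Proof.
elim: k => [|k IH]; first by rewrite subn0.
by rewrite iterS depth_parent IH subnS.
Qed.

Lemma iter_parent_root k z : depth z <= k -> iter k parent z = root.
Proof.
move=> zk; apply/eqP; rewrite -depth_eq0 depth_iter.
by rewrite subn_eq0.
Qed.

Lemma depth_spine i : i <= diam -> depth (spine i) = i.
Proof. by move=> idiam; rewrite depth_iter subKn. Qed.

Lemma spine0 : spine 0 = root.
Proof. by rewrite /spine subn0 iter_parent_root. Qed.

Lemma spine_diam : spine diam = b.
Proof. by rewrite /spine subnn. Qed.

Lemma parent_spine i : i < diam -> parent (spine i.+1) = spine i.
Proof. by move=> idiam; rewrite /spine -iterS subnSK. Qed.

Lemma spine_neq_root i : 0 < i <= diam -> spine i != root.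
Proof. by case/andP=> i0 idiam; rewrite -depth_gt0 depth_spine. Qed.

Lemma spine_depth w : ancestor w b -> spine (depth w) = w.
Proof. exact/eqP. Qed.

Lemma ancestor_depth u z : ancestor u z -> depth u <= depth z.
Proof. by move/eqP/(congr1 depth); rewrite depth_iter => <-; apply: leq_subr. Qed.

Lemma ancestor_spine i : i <= diam -> ancestor (spine i) b.
Proof. by move=> idiam; rewrite /ancestor depth_spine. Qed.

Lemma ancestor_root z : ancestor root z.
Proof. by rewrite /ancestor depth_root ?subn0 ?iter_parent_root. Qed.

Lemma ancestor_up u z : u != root -> ancestor u z -> ancestor (parent u) z.
Proof.
move=> ur uz; have := ancestor_depth uz; move: uz.
rewrite /ancestor -(depth_parentS ur) => /eqP uE udepth.
by rewrite -subnSK // iterS uE.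
Qed.

Lemma ancestorS u x : x != root -> ancestor u x = (x == u) || ancestor u (parent x).
Proof.
move=> xr; have dx := depth_parentS xr; rewrite /ancestor -dx.
case: (leqP (depth u) (depth (parent x))) => du.
  have xu : x != u by apply: contraTneq du => <-; rewrite -ltnNge -dx.
  by rewrite subSn // iterSr (negbTE xu).
have pxu : parent x != u by apply: contraTneq du => <-; rewrite ltnn.
have /eqP -> : (depth (parent x)).+1 - depth u == 0 by rewrite subn_eq0.
have /eqP -> : depth (parent x) - depth u == 0 by rewrite subn_eq0 ltnW.
by rewrite /= (negbTE pxu) orbF.
Qed.

Lemma ancestor_edge u x z :
  ancestor u x -> adj x z -> ~~ ancestor u z -> x = u /\ z = parent u.
Proof.
move=> ux; rewrite adjE => /orP[/andP[xr /eqP xz]|/andP[zr /eqP zx]] uz.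
  by move: ux; rewrite ancestorS // xz (negbTE uz) orbF => /eqP xu; rewrite -xu.
by rewrite ancestorS // zx ux orbT in uz.
Qed.

(* [phi] grows by at most one along every edge (the shift by [n] makes it so across
   [spine j -- spine j.+1]), hence [diam + depth y - j.*2 = phi b - phi y <= dist y b <= diam]. *)
Lemma depth_branch_le y j : j < diam ->
  ancestor (spine j) y -> ~~ ancestor (spine j.+1) y -> depth y <= j.*2.
Proof.
move=> jdiam jy j1y.
pose phi z := if ancestor (spine j.+1) z then depth z + n else j.*2 + n - depth z.
have phi1 x z : adj x z -> phi z <= phi x + 1.
  move=> xz; have zx : adj z x by rewrite adj_sym.
  have := depth_adj xz; have := depth_adj zx; have := depth_ltn x; have := depth_ltn z.
  have := depth_spine (ltnW jdiam); have := depth_spine jdiam; rewrite /phi.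
  case: (boolP (ancestor _ x)) => jx; case: (boolP (ancestor _ z)) => jz; try lia.
    by have [-> ->] := ancestor_edge jx xz jz; rewrite parent_spine //; lia.
  by have [-> ->] := ancestor_edge jz zx jx; rewrite parent_spine //; lia.
have := potential_dist adj_connected phi1 y b; have := diametral y b.
rewrite /phi ancestor_spine // (negbTE j1y) -/(depth b) -/diam; have := depth_ltn y; lia.
Qed.

Lemma dist_iter_parent m z : dist adj (iter m parent z) z <= m.
Proof.
elim: m => [|m IH]; first by rewrite dist_refl.
set w := iter m parent z; rewrite iterS -/w -add1n.
apply: leq_trans (dist_triangle adj_connected _ w _) (leq_add _ IH).
case: (eqVneq w root) => [->|wr]; first by rewrite parent_root dist_refl.
exact/dist_le1/adj_parent.
Qed.

Lemma spine_iter j k : j <= k <= diam -> spine j = iter (k - j) parent (spine k).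
Proof. by case/andP=> jk kdiam; rewrite /spine -iterD; congr iter; lia. Qed.

Lemma exists_branch_point y : exists j,
  [/\ j <= diam, ancestor (spine j) y & j < diam -> ~~ ancestor (spine j.+1) y].
Proof.
have ex : exists j, (j <= diam) && ancestor (spine j) y by exists 0; rewrite spine0 ancestor_root.
have bounded j : (j <= diam) && ancestor (spine j) y -> j <= diam by case/andP.
case: (ex_maxnP ex bounded) => j /andP[jdiam jy] jmax; exists j; split => // jlt.
apply/negP => j1y; suff : j.+1 <= j by rewrite ltnn.
by apply: jmax; rewrite jlt j1y.
Qed.

Lemma dist_center y : dist adj (spine diam./2) y <= diam - diam./2.
Proof.
set h := diam./2; have hdiam : h <= diam by have := odd_double_half diam; lia.
have [j [jdiam jy jmax]] := exists_branch_point y.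
have ydepth : depth y <= j.*2.
  case: (ltnP j diam) => [jlt|]; first exact: depth_branch_le jlt jy (jmax jlt).
  by have := depth_le_diam y; lia.
have jyE : spine j = iter (depth y - j) parent y.
  by move: jy; rewrite /ancestor depth_spine // => /eqP.
apply: leq_trans (dist_triangle adj_connected _ (spine j) _) _.
have := dist_iter_parent (depth y - j) y; rewrite -jyE.
case: (leqP j h) => [jh|hj].
  have := dist_iter_parent (h - j) (spine h).
  by rewrite -spine_iter ?jh // distC //; lia.
have := dist_iter_parent (j - h) (spine j).
by rewrite -spine_iter ?(ltnW hj) //; have := depth_le_diam y; lia.
Qed.

Lemma radius_diam : radius adj = diam - diam./2.
Proof.
apply/eqP; rewrite eqn_leq; apply/andP; split.
  apply: leq_trans (bigminn_le _ _ (spine diam./2)) _.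
  by apply/bigmax_leqP => y _; apply: dist_center.
rewrite /radius; elim/big_ind: _ => [|x y|x _].
- by have := depth_ltn b; rewrite -/diam; lia.
- by rewrite leq_min => -> ->.
have xroot : dist adj x root <= ecc adj x := leq_bigmax (F := dist adj x) root.
have xb : dist adj x b <= ecc adj x := leq_bigmax (F := dist adj x) b.
have := dist_triangle adj_connected root x b; rewrite (distC adj_sym adj_connected root x).
rewrite -/(depth b) -/diam; have := odd_double_half diam; lia.
Qed.

Definition off_children u := [set c | ~~ ancestor c b & parent c == u].

Lemma off_spine_neq_root c : ~~ ancestor c b -> c != root.
Proof. by apply: contraNneq => ->; apply: ancestor_root. Qed.

Lemma children_off_spine w : ~~ ancestor w b -> children w = off_children w.
Proof.
move=> wb; apply/setP => c; rewrite !inE /is_child.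
case: (eqVneq (parent c) w) => [cw|]; last by rewrite !andbF.
rewrite !andbT; apply/idP/idP => [cr|/off_spine_neq_root //].
by apply: contraNN wb; rewrite -cw; apply: ancestor_up.
Qed.

Lemma children_spine i : i <= diam -> children (spine i) =
  off_children (spine i) :|: (if i < diam then [set spine i.+1] else set0).
Proof.
move=> idiam; apply/setP => c; rewrite !inE /is_child; apply/idP/idP.
  case/andP=> cr /eqP ci; case: (boolP (ancestor c b)) => cb /=; last by rewrite ci eqxx.
  have := depth_parentS cr; rewrite ci depth_spine // => cdepth.
  have -> : i < diam by rewrite cdepth depth_le_diam.
  by rewrite inE -{1}(spine_depth cb) -cdepth.
case/orP=> [/andP[/off_spine_neq_root -> ->] //|].
case: ifP => [idiam'|]; last by rewrite inE.
by rewrite inE => /eqP ->; rewrite spine_neq_root ?parent_spine ?eqxx.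
Qed.

Lemma deg_spine i : i <= diam ->
  deg adj (spine i) = (0 < i) + (i < diam) + #|off_children (spine i)|.
Proof.
move=> idiam; rewrite deg_children children_spine // -depth_gt0 depth_spine // -addnA.
congr (_ + _); case: ifP => idiam'; last by rewrite setU0.
by rewrite setUC cardsU1 inE ancestor_spine.
Qed.

Lemma deg_off_spine w : ~~ ancestor w b -> deg adj w = #|off_children w|.+1.
Proof. by move=> wb; rewrite deg_children off_spine_neq_root // children_off_spine. Qed.

Hypothesis n_gt1 : 1 < n.

Lemma diam_gt0 : 0 < diam.
Proof.
apply: leq_trans (diametral (Ordinal (ltnW n_gt1)) (Ordinal n_gt1)).
by rewrite lt0n dist_eq0.
Qed.

Lemma off_children_root : off_children root = set0.
Proof.
apply/setP => c; rewrite !inE; apply/negbTE/andP => -[cb /eqP croot].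
have c1 : depth c = 1 by rewrite -(depth_parentS (off_spine_neq_root cb)) croot depth_root.
have c_off : ~~ ancestor (spine 1) c.
  apply: contraNN cb => /eqP; rewrite c1 depth_spine ?diam_gt0 // subnn /= => ->.
  exact: ancestor_spine diam_gt0.
have := depth_branch_le diam_gt0 _ c_off; rewrite spine0 ancestor_root c1.
by move/(_ isT).
Qed.

Lemma off_children_end : off_children b = set0.
Proof.
apply/setP => c; rewrite !inE; apply/negbTE/andP => -[cb /eqP cend].
have := depth_parentS (off_spine_neq_root cb); rewrite cend -/diam.
by have := depth_le_diam c; lia.
Qed.

Lemma deg_root : deg adj root = 1.
Proof. by have := deg_spine (leq0n diam); rewrite spine0 off_children_root cards0 diam_gt0. Qed.

Lemma deg_end : deg adj b = 1.
Proof.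
by have := deg_spine (leqnn diam); rewrite spine_diam off_children_end cards0 diam_gt0 ltnn.
Qed.

Lemma deg_spine_inner i : 0 < i < diam -> deg adj (spine i) = #|off_children (spine i)|.+2.
Proof. by case/andP=> i0 idiam; rewrite deg_spine ?(ltnW idiam) // i0 idiam. Qed.

Lemma exists_branch w : ~~ ancestor w b ->
  exists2 i, 0 < i < diam & 0 < #|off_children (spine i)|.
Proof.
elim: {w}(depth w) {-2}w (erefl (depth w)) => [|k IH] w wdepth wb.
  by move/eqP: wdepth; rewrite depth_eq0 => /eqP wroot; rewrite wroot ancestor_root in wb.
case: (boolP (ancestor (parent w) b)) => pwb; last first.
  by apply: (IH (parent w)); rewrite ?depth_parent ?wdepth.
have pw_off : 0 < #|off_children (parent w)| by apply/card_gt0P; exists w; rewrite inE wb eqxx.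
have pwE := spine_depth pwb; rewrite -pwE in pw_off.
exists (depth (parent w)) => //; apply/andP; split.
  by rewrite lt0n; apply: contraTneq pw_off => ->; rewrite spine0 off_children_root cards0.
rewrite ltn_neqAle depth_le_diam andbT.
by apply: contraTneq pw_off => ->; rewrite spine_diam off_children_end cards0.
Qed.

Lemma deg_gt0 u : 0 < deg adj u.
Proof.
case: (eqVneq u root) => [->|ur]; first by rewrite deg_root.
by rewrite deg_children ur.
Qed.

Lemma spine_inj : injective (fun i : 'I_diam.+1 => spine i).
Proof. by move=> i j /(congr1 depth); rewrite !depth_spine -1?ltnS // => /val_inj. Qed.

Lemma spine_imset : [set spine i | i : 'I_diam.+1] = [set w | ancestor w b].
Proof.
apply/setP => w; rewrite inE; apply/imsetP/idP => [[i _ ->]|wb].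
  exact: ancestor_spine (ltn_ord i).
by exists (Ordinal (depth_le_diam w : depth w < diam.+1)); rewrite ?spine_depth.
Qed.

Lemma all_spineP : (forall w, ancestor w b) <-> n = diam.+1.
Proof.
have card_spine : #|[set w | ancestor w b]| = diam.+1.
  by rewrite -spine_imset card_imset ?card_ord //; apply: spine_inj.
split => [all_b | ndiam w].
  by rewrite -card_spine -[LHS]card_ord; apply: eq_card => w; rewrite inE all_b.
have : [set w | ancestor w b] = setT.
  by apply/eqP; rewrite eqEcard subsetT cardsT card_ord card_spine -ndiam leqnn.
by move/setP/(_ w); rewrite !inE.
Qed.

Lemma all_spine_diam1 : diam = 1 -> forall w, ancestor w b.
Proof. by move=> diamE w; apply/negPn/negP => /exists_branch[i]; rewrite diamE; lia. Qed.

Lemma path_graph_card : is_path_graph adj -> n = diam.+1.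
Proof.
case=> f [f_inj f_adj]; have n_gt0 := ltnW n_gt1.
have n1 : n.-1 < n by rewrite ltn_predL.
have [x fx] := codomP (injF_onto f_inj (Ordinal n_gt0)).
have [y fy] := codomP (injF_onto f_inj (Ordinal n1)).
have f1 z w : adj z w -> f w <= f z + 1 by rewrite f_adj => /orP[] /eqP; lia.
have := potential_dist adj_connected f1 x y; rewrite -fx -fy /=.
by have := diametral x y; have := depth_ltn b; rewrite -/(depth b) -/diam; lia.
Qed.

Lemma path_graph_all_spine : (forall w, ancestor w b) -> is_path_graph adj.
Proof.
move=> all_b; have depth_inj : injective depth.
  by move=> u w uw; rewrite -(spine_depth (all_b u)) uw spine_depth.
exists (fun w => Ordinal (depth_ltn w)); split => [u w [] /depth_inj //|u v /=].
have childE z w : is_child z w = (depth z == (depth w).+1).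
  apply/andP/eqP => [[zr /eqP <-]|zw]; first by rewrite depth_parentS.
  have zr : z != root by rewrite -depth_gt0 zw.
  by split => //; apply/eqP/depth_inj; have := depth_parentS zr; rewrite zw => -[].
by rewrite adjE !childE.
Qed.

Section RandicOnSpine.
Variable R : rcfType.
Local Open Scope ring_scope.
Local Notation ideg w := (invsqrtn R (deg adj w)).

Lemma sum_spine (G : 'I_n -> R) :
  \sum_(w | ancestor w b) G w = \sum_(i < diam.+1) G (spine i).
Proof.
rewrite (eq_bigl (mem [set w | ancestor w b])) => [|w]; last by rewrite !inE.
by rewrite -spine_imset big_imset //; apply: in2W spine_inj.
Qed.

Lemma randic_split : randic R adj =
  \sum_(i < diam) ideg (spine i) * ideg (spine i.+1) +
  \sum_(w | ~~ ancestor w b) ideg w * ideg (parent w).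
Proof.
rewrite randic_parent (bigID (fun w => ancestor w b)) /=; congr (_ + _).
  rewrite big_mkcondl sum_spine big_ord_recl spine0 eqxx add0r.
  by apply: eq_bigr => i _; rewrite spine_neq_root /= ?parent_spine 1?mulrC.
by apply: eq_bigl => w; case: (boolP (ancestor w b)) => wb; rewrite ?andbF ?off_spine_neq_root.
Qed.

Lemma off_spine_ge :
  \sum_(i < diam.+1) #|off_children (spine i)|%:R * ideg (spine i) <=
  \sum_(w | ~~ ancestor w b) ideg w * ideg (parent w).
Proof.
have edges : \sum_(w | ~~ ancestor w b) (ideg (parent w) - #|off_children w|%:R * ideg w) <=
             \sum_(w | ~~ ancestor w b) ideg w * ideg (parent w).
  apply: ler_sum => w wb; have := invsqrtn_edge_ge R (deg_gt0 w) (deg_gt0 (parent w)).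
  by rewrite (deg_off_spine wb).
apply: le_trans edges; rewrite sumrB.
have -> : \sum_(w | ~~ ancestor w b) ideg (parent w) = \sum_u #|off_children u|%:R * ideg u.
  rewrite (partition_big parent xpredT) //=; apply: eq_bigr => u _.
  rewrite (eq_bigr (fun=> ideg u)) => [|w /andP[_ /eqP ->] //].
  by rewrite sumr_const mulr_natl; congr (_ *+ _); apply: eq_card => w; rewrite inE.
by rewrite (bigID (fun u => ancestor u b)) /= addrK sum_spine.
Qed.

Lemma randic_ge_spine :
  \sum_(i < diam) ideg (spine i) * ideg (spine i.+1) +
  \sum_(i < diam.+1) #|off_children (spine i)|%:R * ideg (spine i) <= randic R adj.
Proof. by rewrite randic_split lerD2l off_spine_ge. Qed.

Lemma randic_all_spine : (forall w, ancestor w b) ->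
  randic R adj = \sum_(i < diam) ideg (spine i) * ideg (spine i.+1).
Proof.
by move=> all_b; rewrite randic_split [X in _ + X]big_pred0 ?addr0 // => w; rewrite all_b.
Qed.

Lemma randic_ge_excess m : diam = m.+2 ->
  m%:R / 2 + Num.sqrt 2 + \sum_(i < m.+1) (Num.sqrt (deg adj (spine i.+1))%:R - Num.sqrt 2)
  <= randic R adj.
Proof.
move=> diamE; pose x i := ideg (spine i).
have send : spine m.+2 = b by rewrite -diamE spine_diam.
have x0 : x 0%N = 1 by rewrite /x spine0 deg_root invsqrtn1.
have xend : x m.+2 = 1 by rewrite /x send deg_end invsqrtn1.
have inner i : (i <= m)%N -> (0 < i.+1 < diam)%N by rewrite diamE /= !ltnS.
have xt i : (i <= m)%N -> x i.+1 <= invsqrtn R 2.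
  by move=> im; apply: invsqrtn_le; rewrite deg_spine_inner ?inner.
have := path_products_ge (invsqrtn_le1 R (isT : (0 < 2)%N)) x0 xend xt.
rewrite invsqrtn2_sqr mul2_invsqrtn2.
have := randic_ge_spine; rewrite diamE.
rewrite (big_ord_recLR (fun i => #|off_children (spine i)|%:R * ideg (spine i)) m.+1) /=.
rewrite spine0 send off_children_root off_children_end cards0 !mul0r add0r addr0.
rewrite (eq_bigr (fun i : 'I_m.+1 => Num.sqrt (deg adj (spine i.+1))%:R - 2 * x i.+1)).
  rewrite !sumrB sumr_const card_ord -mulr_sumr mulrS -(mulr_natl (Num.sqrt 2) m) /x.
  set Sx := \sum_(i < m.+1) _; set Sd := \sum_(i < m.+1) _; lra.
by move=> i _; rewrite /x (deg_spine_inner (inner _ (ltn_ord i))) natr_mul_invsqrtnSS.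
Qed.

Lemma randic_path_value m : diam = m.+2 -> (forall w, ancestor w b) ->
  randic R adj = m%:R / 2 + Num.sqrt 2.
Proof.
move=> diamE all_b; rewrite randic_all_spine // diamE.
rewrite (path_products_const (t := invsqrtn R 2) (x := fun i => ideg (spine i))) /=.
- by rewrite mul2_invsqrtn2 invsqrtn2_sqr addrC.
- by rewrite spine0 deg_root invsqrtn1.
- by rewrite -diamE spine_diam deg_end invsqrtn1.
move=> i im; rewrite deg_spine_inner ?diamE /= ?ltnS //.
suff -> : off_children (spine i.+1) = set0 by rewrite cards0.
by apply/setP => w; rewrite !inE all_b.
Qed.

Lemma randic_diam1 : diam = 1%N -> randic R adj = 1.
Proof.
move=> diam1; rewrite randic_all_spine; last exact: all_spine_diam1.
have spine1 : spine 1%N = b by rewrite -diam1 spine_diam.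
by rewrite diam1 big_ord1 /= spine0 spine1 deg_root deg_end invsqrtn1 mulr1.
Qed.

Lemma sqrt_excess_ge0 m i : diam = m.+2 -> (i <= m)%N ->
  0 <= Num.sqrt (deg adj (spine i.+1))%:R - Num.sqrt 2 :> R.
Proof.
move=> diamE im; rewrite subr_ge0 ler_sqrt // ler_nat deg_spine_inner //.
by rewrite diamE /= !ltnS.
Qed.

Lemma sqrt_excess_branch m : diam = m.+2 -> ~~ [forall w, ancestor w b] ->
  Num.sqrt 3 - Num.sqrt 2 <=
  \sum_(i < m.+1) (Num.sqrt (deg adj (spine i.+1))%:R - Num.sqrt 2) :> R.
Proof.
move=> diamE /forallPn[w /exists_branch[i /andP[i0 idiam] i_off]].
have im : (i.-1 < m.+1)%N by rewrite diamE in idiam; lia.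
rewrite (bigD1 (Ordinal im)) //= prednK // -[X in X <= _]addr0 lerD //.
  rewrite lerD2r ler_sqrt // ler_nat deg_spine_inner ?i0 //.
by apply: sumr_ge0 => j _; apply: sqrt_excess_ge0 diamE _; rewrite -ltnS.
Qed.

Lemma randic_sub_radius_even_path : is_path_graph adj /\ ~~ odd n /\ (2 < n)%N ->
  randic R adj - (radius adj)%:R = Num.sqrt 2 - 3 / 2.
Proof.
case=> path_adj [n_even n_gt2]; have ndiam := path_graph_card path_adj.
have [m diamE] : exists m, diam = m.+2 by exists diam.-2; lia.
rewrite radius_diam natr_sub_half (randic_path_value diamE) ?all_spineP //.
move: n_even; rewrite ndiam diamE /= !negbK => m_odd.
rewrite m_odd -[m.+2]addn2 natrD /=; lra.
Qed.

Lemma randic_sub_radius_ge0 : ~ (is_path_graph adj /\ ~~ odd n /\ (2 < n)%N) ->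
  0 <= randic R adj - (radius adj)%:R.
Proof.
move=> not_even_path; rewrite radius_diam natr_sub_half.
have [diam1|diam_neq1] := eqVneq diam 1%N; first by rewrite randic_diam1 // diam1 /=; lra.
have [m diamE] : exists m, diam = m.+2 by exists diam.-2; have := diam_gt0; lia.
have := randic_ge_excess diamE; rewrite diamE /= negbK -[m.+2]addn2 natrD.
set S := \sum_(i < m.+1) _ => R_ge.
have S_ge0 : 0 <= S by apply: sumr_ge0 => i _; apply: sqrt_excess_ge0 diamE _; rewrite -ltnS.
have r2 : 1 <= Num.sqrt 2 :> R by rewrite -{1}sqrtr1 ler_sqrt ?ler0n // ler1n.
have r3 : 3 / 2 <= Num.sqrt 3 :> R.
  by have := sqr_sqrtr (ler0n R 3); have := sqrtr_ge0 (3%:R : R); nra.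
case m_odd: (odd m) => /=; last by lra.
have /(sqrt_excess_branch diamE) : ~~ [forall w, ancestor w b].
  apply/negP => /forallP /all_spineP ndiam; apply: not_even_path.
  split; first exact/path_graph_all_spine/all_spineP.
  by rewrite ndiam diamE /= negbK m_odd.
rewrite -/S; lra.
Qed.

Lemma randic_sub_radius_K2 : n = 2%N -> randic R adj - (radius adj)%:R = 0.
Proof.
move=> n2; have diam1 : diam = 1%N by have := depth_ltn b; have := diam_gt0; rewrite n2 -/diam; lia.
by rewrite radius_diam randic_diam1 // diam1 subrr.
Qed.
End RandicOnSpine.
End Diameter.
End RootedTree.

Local Open Scope ring_scope.

Theorem theorem5p1 (R : realType) (n : nat) (adj : rel 'I_n) :
  (2 <= n)%N -> simple_graph adj -> is_tree adj ->
  (is_path_graph adj /\ ~~ odd n /\ (2 < n)%N ->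
     randic R adj - (radius adj)%:R = Num.sqrt 2 - 3 / 2) /\
  (~ (is_path_graph adj /\ ~~ odd n /\ (2 < n)%N) ->
     0 <= randic R adj - (radius adj)%:R) /\
  (n = 2%N -> randic R adj - (radius adj)%:R = 0).
Proof.
move=> n_gt1 [adj_sym adj_irr] [adj_connected adj_acyclic].
have [root [b diametral]] := exists_diametral_pair adj (Ordinal (ltnW n_gt1)).
split; [|split].
- exact (randic_sub_radius_even_path adj_sym adj_irr adj_connected adj_acyclic diametral n_gt1 R).
- exact (randic_sub_radius_ge0 adj_sym adj_irr adj_connected adj_acyclic diametral n_gt1 R).
- exact (randic_sub_radius_K2 adj_sym adj_irr adj_connected adj_acyclic diametral n_gt1 R).
Qed.
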